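(* Let $\mathcal{L}\subseteq\mathcal{L}_n$ be a nonzero linear subspace invariant under the conjugation action of $S_n$. Then $\mathcal{L}\cap\mathcal{L}_n^+$ contains a nonzero matrix if and only if $J\in\mathcal{L}$ (equivalently $\operatorname{span}_{\mathbb{R}}(J)\subseteq\mathcal{L}$, where $\operatorname{span}_{\mathbb{R}}(J)$ is the trivial $S_n$-module).
   Context: Let $\mathbf{1}\in\mathbb{R}^n$ be the all-ones column vector, $\mathcal{L}_n=\{Q\in \mathrm{Mat}_n(\mathbb{R}): Q\mathbf{1}=0\}$, and $\mathcal{L}_n^+$ the set of $Q\in\mathcal{L}_n$ with nonnegative off-diagonal entries. $J:=\frac1n\mathbf{1}\mathbf{1}^T-I_n$ (the rate matrix with all off-diagonal entries $\frac1n$). For $\sigma\in S_n$, $K_\sigma$ is the permutation matrix with $e_iK_\sigma=e_{\sigma(i)}$; the conjugation action is $\sigma\cdot X=K_\sigma^TXK_\sigma$, and a subspace is invariant if it is closed under this action for all $\sigma\in S_n$. *)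

From HB Require Import structures.
From mathcomp Require Import all_boot all_order all_algebra all_fingroup.
From mathcomp Require Import reals.
Set Implicit Arguments. Unset Strict Implicit. Unset Printing Implicit Defensive.
Import Order.TTheory GRing.Theory Num.Theory.
Local Open Scope ring_scope.

Definition ones (R : realType) (n : nat) : 'cV[R]_n := const_mx 1.

Definition inLn (R : realType) (n : nat) (Q : 'M[R]_n) : Prop :=
  Q *m ones R n = 0.

Definition inLnplus (R : realType) (n : nat) (Q : 'M[R]_n) : Prop :=
  inLn Q /\ (forall i j : 'I_n, i != j -> 0 <= Q i j).

Definition Jmat (R : realType) (n : nat) : 'M[R]_n :=
  (n%:R)^-1 *: (ones R n *m (ones R n)^T) - 1%:M.

(* K_sigma: e_i K_sigma = e_{sigma i}, i.e. K_sigma i j = (sigma i == j);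
   this is mathcomp's perm_mx. *)
Definition Kperm (R : realType) (n : nat) (s : 'S_n) : 'M[R]_n := perm_mx s.

Definition pact (R : realType) (n : nat) (s : 'S_n) (X : 'M[R]_n) : 'M[R]_n :=
  (Kperm R s)^T *m X *m Kperm R s.

Definition Sn_invariant (R : realType) (n : nat) (L : {vspace 'M[R]_n}) : Prop :=
  forall (s : 'S_n) (X : 'M[R]_n), X \in L -> pact s X \in L.

From HB Require Import structures.
From mathcomp Require Import all_boot all_order all_algebra all_fingroup.
From mathcomp Require Import reals.
From mathcomp Require Import ring zify.
Import Order.TTheory GRing.Theory Num.Theory.
Local Open Scope ring_scope.

(* Backward direction: J has zero row sums and off-diagonal entries 1/n >= 0,
   and J != 0 as soon as n >= 2; a nonzero subspace of L_n forces n >= 2,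
   since for n <= 1 the only matrix with zero row sums is 0.
   Forward direction: a nonzero Q in L_n^+ has a positive off-diagonal entry
   Q a b.  Its symmetrisation A = \sum_s s.Q lies in L (invariance) and is
   S_n-symmetric, i.e. A (t i) (t j) = A i j.  Since S_n acts transitively
   on the diagonal and on ordered pairs of distinct indices, a symmetric
   matrix with zero row sums is the multiple (n * A a b) J.  Finally
   A a b >= Q a b > 0, so J is a nonzero rescaling of A and lies in L. *)

Lemma JmatE {R : realType} {n : nat} (i j : 'I_n) :
  Jmat R n i j = n%:R^-1 - (i == j)%:R.
Proof. by rewrite /Jmat !mxE big_ord1 !mxE !mulr1. Qed.

Lemma pactE {R : realType} {n : nat} (s : 'S_n) (X : 'M[R]_n) (i j : 'I_n) :
  pact s X i j = X (s^-1%g i) (s^-1%g j).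
Proof.
rewrite /pact /Kperm tr_perm_mx -row_permE.
have -> : perm_mx s = perm_mx (s^-1)^-1 :> 'M[R]_n by rewrite invgK.
by rewrite -col_permE !mxE.
Qed.

Lemma inLn_row_sum {R : realType} {n : nat} {X : 'M[R]_n} :
  inLn X -> forall i, \sum_k X i k = 0.
Proof.
move=> X1 i; have := congr1 (fun M : 'cV[R]_n => M i ord0) X1.
rewrite !mxE => row_i; rewrite -[RHS]row_i.
by apply: eq_bigr => k _; rewrite /ones mxE mulr1.
Qed.

(* For n <= 1 the space L_n is trivial: a one-entry row sums to its entry. *)
Lemma inLn_small_eq0 {R : realType} {n : nat} {X : 'M[R]_n} :
  (n <= 1)%N -> inLn X -> X = 0.
Proof.
move=> n_le1 X1; have all_eq (k l : 'I_n) : k = l.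
  by apply: val_inj => /=; move: (ltn_ord k) (ltn_ord l); lia.
apply/matrixP => i j; rewrite mxE (all_eq j i).
have := inLn_row_sum X1 i; rewrite (bigD1 i) //= big_pred0 ?addr0 // => k.
by rewrite (all_eq k i) eqxx.
Qed.

(* A nonzero matrix of L_n^+ has a positive off-diagonal entry: otherwise
   all off-diagonal entries vanish and the zero row sums kill the diagonal. *)
Lemma inLnplus_pos_offdiag {R : realType} {n : nat} {Q : 'M[R]_n} :
  inLnplus Q -> Q != 0 -> exists a b : 'I_n, a != b /\ 0 < Q a b.
Proof.
move=> [Q1 Qge0] Q0.
have [[a b] /andP[ab Qab] | Hnone] :=
  pickP [pred p : 'I_n * 'I_n | (p.1 != p.2) && (0 < Q p.1 p.2)].
  by exists a, b.
have off i k : k != i -> Q i k = 0.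
  move=> ki; have := Hnone (i, k); rewrite /= eq_sym ki /= => /negbT.
  by rewrite lt_def negb_and negbK Qge0 1?eq_sym // orbF => /eqP.
case/negP: Q0; apply/eqP/matrixP => i j; rewrite mxE.
have [->|ji] := eqVneq j i; last exact: off.
have := inLn_row_sum Q1 i; rewrite (bigD1 i) //= big1 ?addr0 //; exact: off.
Qed.

Lemma perm_two_transitive {n : nat} {i j k l : 'I_n} : i != j -> k != l ->
  exists t : 'S_n, t i = k /\ t j = l.
Proof.
move=> ij kl; exists (tperm i k * tperm (tperm i k j) l)%g.
rewrite !permM tpermL; split; last by rewrite tpermL.
have jk : tperm i k j != k.
  by rewrite -{2}(tpermL i k) (inj_eq perm_inj) eq_sym.
by apply: tpermD; rewrite // eq_sym.
Qed.

Definition Sn_symmetric {R : realType} {n : nat} (A : 'M[R]_n) : Prop :=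
  forall (t : 'S_n) (i j : 'I_n), A (t i) (t j) = A i j.

Lemma Sn_symmetric_inLn_scaleJ {R : realType} {n : nat} {A : 'M[R]_n}
    {a b : 'I_n} :
  Sn_symmetric A -> inLn A -> a != b -> A = (n%:R * A a b) *: Jmat R n.
Proof.
move=> Asym A1 ab.
have Aoff i j : i != j -> A i j = A a b.
  by move=> ij; have [t [<- <-]] := perm_two_transitive ab ij; rewrite Asym.
have Adiag i : A i i = A a a by rewrite -(tpermL a i) Asym.
have n_neq0 : n%:R != 0 :> R by rewrite pnatr_eq0; move: (ltn_ord a); lia.
(* Row a sums to zero: A a a + (n - 1) A a b = 0. *)
have Aaa : A a a = A a b * (1 - n%:R).
  have := inLn_row_sum A1 a; rewrite (bigD1 a) //=.
  rewrite (eq_bigr (fun=> A a b)) => [|k ka]; last by rewrite Aoff // eq_sym.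
  rewrite sumr_const cardC1 card_ord => /eqP; rewrite addr_eq0 => /eqP ->.
  rewrite -mulr_natr -[in n%:R](prednK (leq_ltn_trans (leq0n a) (ltn_ord a))).
  by rewrite -natr1; ring.
apply/matrixP => i j; rewrite mxE JmatE.
have [<-|ij] := eqVneq i j; last first.
  by rewrite Aoff // subr0 [n%:R * _]mulrC mulfK.
by rewrite (Adiag i) Aaa /= mulr1n; field.
Qed.

Definition symmetrize {R : realType} {n : nat} (X : 'M[R]_n) : 'M[R]_n :=
  \sum_(s : 'S_n) pact s X.

Lemma symmetrizeE {R : realType} {n : nat} (X : 'M[R]_n) (i j : 'I_n) :
  symmetrize X i j = \sum_(s : 'S_n) X (s^-1%g i) (s^-1%g j).
Proof. by rewrite summxE; apply: eq_bigr => s _; rewrite pactE. Qed.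

(* Reindexing the orbit sum by s |-> s * t shows that it is symmetric. *)
Lemma symmetrize_symmetric {R : realType} {n : nat} (X : 'M[R]_n) :
  Sn_symmetric (symmetrize X).
Proof.
move=> t i j; rewrite !symmetrizeE (reindex_inj (mulIg t)) /=.
by apply: eq_bigr => s _; rewrite invMg !permM !permK.
Qed.

Lemma symmetrize_in {R : realType} {n : nat} {L : {vspace 'M[R]_n}}
    {X : 'M[R]_n} :
  Sn_invariant L -> X \in L -> symmetrize X \in L.
Proof. by move=> Linv XL; apply: memv_suml => s _; exact: Linv. Qed.

(* Averaging cannot destroy a positive off-diagonal entry of a matrix whose
   off-diagonal entries are nonnegative: the identity term already gives it. *)
Lemma symmetrize_offdiag_pos {R : realType} {n : nat} {X : 'M[R]_n}
    {a b : 'I_n} :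
  (forall i j : 'I_n, i != j -> 0 <= X i j) -> a != b -> 0 < X a b ->
  0 < symmetrize X a b.
Proof.
move=> Xge0 ab Xab; rewrite symmetrizeE (bigD1 1%g) //= invg1 !perm1.
by rewrite ltr_pwDl // sumr_ge0 // => s _; rewrite Xge0 // (inj_eq perm_inj).
Qed.

Lemma Jmat_offdiag_ge0 {R : realType} {n : nat} (i j : 'I_n) :
  i != j -> 0 <= Jmat R n i j.
Proof. by move=> ij; rewrite JmatE (negbTE ij) subr0 invr_ge0 ler0n. Qed.

(* For n >= 2 the entry J 0 1 = 1/n is nonzero. *)
Lemma Jmat_neq0 (R : realType) {n : nat} : (1 < n)%N -> Jmat R n != 0.
Proof.
move=> n_gt1; apply/eqP => /matrixP/(_ (Ordinal (ltnW n_gt1)) (Ordinal n_gt1)).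
rewrite JmatE mxE /= subr0 => /eqP; rewrite invr_eq0 pnatr_eq0.
by move: n_gt1; lia.
Qed.

Theorem mainTheorem10 (R : realType) (n : nat) (L : {vspace 'M[R]_n}) :
  (forall X : 'M[R]_n, X \in L -> inLn X) ->
  L != 0%VS ->
  Sn_invariant L ->
  ((exists Q : 'M[R]_n, [/\ Q \in L, inLnplus Q & Q != 0]) <-> Jmat R n \in L).
Proof.
move=> LsubLn L_neq0 Linv; split.
  case=> Q [QL Qplus Q_neq0].
  have [a [b [ab Qab]]] := inLnplus_pos_offdiag Qplus Q_neq0.
  have AL := symmetrize_in Linv QL.
  have Aab := symmetrize_offdiag_pos Qplus.2 ab Qab.
  have AJ := Sn_symmetric_inLn_scaleJ (symmetrize_symmetric Q) (LsubLn _ AL) ab.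
  have c_neq0 : n%:R * symmetrize Q a b != 0.
    by rewrite mulf_neq0 ?gt_eqF // ltr0n; move: (ltn_ord a); lia.
  by rewrite -(scalerK c_neq0 (Jmat R n)) -AJ memvZ.
move=> JL; have n_gt1 : (1 < n)%N.
  rewrite ltnNge; apply/negP => n_le1; move: L_neq0.
  by rewrite -vpick0 (inLn_small_eq0 n_le1 (LsubLn _ (memv_pick L))) eqxx.
exists (Jmat R n); split => //; last exact: Jmat_neq0.
by split; [exact: LsubLn | exact: Jmat_offdiag_ge0].
Qed.
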